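(* Let $\lambda$ be a positive integer, $\mu\in\mathbb{R}$, and let $F$, $G$ be smooth functions of $\psi$ on an open interval, with $G$ nonconstant. Consider the function $$I_\lambda=\mathcal{U}^\lambda G(\psi)=\left(p_r+\frac{\mu}{r}\mathcal{X}_L\right)^\lambda G(\psi).$$ Then $I_\lambda$ is a constant of motion of $H=\frac12p_r^2+\frac{1}{r^2}\left(\frac12p_\psi^2+F(\psi)\right)$ (i.e. $\{I_\lambda,H\}=0$, equivalently $\mathcal{X}_H I_\lambda=0$) if and only if $\lambda\mu=1$ and there are constants $k,\psi_0\in\mathbb{R}$ and $A\neq0$ such that $$F(\psi)=\frac{k}{\sin^2(\lambda\psi+\psi_0)},\qquad G(\psi)=A\cos(\lambda\psi+\psi_0)$$ (on the interval, where $\sin(\lambda\psi+\psi_0)\neq0$).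
   Context: Phase space coordinates are $(r,\psi,p_r,p_\psi)$ with $r>0$ and canonical Poisson bracket; dots denote derivatives in $\psi$. $L=\frac12p_\psi^2+F(\psi)$, $\mathcal{X}_L=p_\psi\frac{\partial}{\partial\psi}-\dot F\frac{\partial}{\partial p_\psi}$ is its Hamiltonian vector field, and $\mathcal{X}_H=p_r\frac{\partial}{\partial r}+\frac{2L}{r^3}\frac{\partial}{\partial p_r}+\frac{1}{r^2}\mathcal{X}_L$ is the Hamiltonian vector field of $H$. $\mathcal{U}=p_r+\frac{\mu}{r}\mathcal{X}_L$ is a differential operator ($p_r$ and $\mu/r$ act by multiplication), and $\mathcal{U}^\lambda G$ means applying $\mathcal{U}$ $\lambda$ times to the function $G(\psi)$. *)

From Stdlib Require Import Reals Lra.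
Open Scope R_scope.

Definition is_open_interval (J : R -> Prop) : Prop :=
  (exists x, J x) /\
  (forall x y z, J x -> J y -> x <= z <= y -> J z) /\
  (forall x, J x -> exists eps, 0 < eps /\ forall y, Rabs (y - x) < eps -> J y).

Definition smooth_on (J : R -> Prop) (f : R -> R) : Prop :=
  exists D : nat -> R -> R, D 0%nat = f /\
    forall n x, J x -> derivable_pt_lim (D n) x (D (S n) x).

(* Phase-space functions of (r, psi, p_r, p_psi). *)
Definition PF := R -> R -> R -> R -> R.

Definition dom (J : R -> Prop) (r psi : R) : Prop := 0 < r /\ J psi.

Definition is_d_r (J : R -> Prop) (f f' : PF) : Prop :=
  forall r psi pr ppsi, dom J r psi ->
    derivable_pt_lim (fun x => f x psi pr ppsi) r (f' r psi pr ppsi).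
Definition is_d_psi (J : R -> Prop) (f f' : PF) : Prop :=
  forall r psi pr ppsi, dom J r psi ->
    derivable_pt_lim (fun x => f r x pr ppsi) psi (f' r psi pr ppsi).
Definition is_d_pr (J : R -> Prop) (f f' : PF) : Prop :=
  forall r psi pr ppsi, dom J r psi ->
    derivable_pt_lim (fun x => f r psi x ppsi) pr (f' r psi pr ppsi).
Definition is_d_ppsi (J : R -> Prop) (f f' : PF) : Prop :=
  forall r psi pr ppsi, dom J r psi ->
    derivable_pt_lim (fun x => f r psi pr x) ppsi (f' r psi pr ppsi).

Definition XL (dF : R -> R) (f_psi f_ppsi : PF) : PF :=
  fun r psi pr ppsi => ppsi * f_psi r psi pr ppsi - dF psi * f_ppsi r psi pr ppsi.

Definition U_iterates (J : R -> Prop) (dF : R -> R) (mu : R) (G : R -> R)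
    (I : nat -> PF) (n : nat) : Prop :=
  (forall r psi pr ppsi, dom J r psi -> I 0%nat r psi pr ppsi = G psi) /\
  forall k, (k < n)%nat ->
    exists Ipsi Ippsi, is_d_psi J (I k) Ipsi /\ is_d_ppsi J (I k) Ippsi /\
      forall r psi pr ppsi, dom J r psi ->
        I (S k) r psi pr ppsi =
          pr * I k r psi pr ppsi + mu / r * XL dF Ipsi Ippsi r psi pr ppsi.

(* f is a constant of motion of H = p_r^2/2 + L/r^2:  X_H f = 0 on the domain,
   X_H = p_r d_r + (2L/r^3) d_{p_r} + (1/r^2) X_L. *)
Definition constant_of_motion (J : R -> Prop) (F dF : R -> R) (f : PF) : Prop :=
  exists fr fpsi fpr fppsi,
    is_d_r J f fr /\ is_d_psi J f fpsi /\ is_d_pr J f fpr /\ is_d_ppsi J f fppsi /\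
    forall r psi pr ppsi, dom J r psi ->
      pr * fr r psi pr ppsi
      + 2 * (/2 * ppsi ^ 2 + F psi) / r ^ 3 * fpr r psi pr ppsi
      + / r ^ 2 * XL dF fpsi fppsi r psi pr ppsi = 0.

From Stdlib Require Import Reals Lra Lia Classical IndefiniteDescription.
Open Scope R_scope.

(* Since [p_r] and [1/r] commute with [X_L], [U ^ k G] is the binomial form
   [sum_b C(k, b) p_r ^ (k - b) r ^ (-b) a_b] with [a_b = (mu X_L) ^ b G], and
   [r ^ 2 X_H U ^ lam G] is again such a form in [(p_r, 1/r)].  If it vanishes, its two lowest
   coefficients (at [p_r = 1], [1/r -> 0+]) give [lam mu = 1] (as [G' <> 0] somewhere),
   [G'' = - lam ^ 2 G] and [F' G' = 2 lam ^ 2 F G]; hence [G = A cos (lam psi + psi0)] and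
   [(F sin ^ 2 (lam psi + psi0))' = 0].  Conversely, for such [F] and [G], [X_L] annihilates
   [L], so [(mu X_L) ^ 2 a_b = -2L a_b] and the residual cancels identically. *)

Lemma derivable_pt_lim_eq f x l l' :
  derivable_pt_lim f x l -> l = l' -> derivable_pt_lim f x l'.
Proof. intros H <-; exact H. Qed.

Lemma derivable_pt_lim_near f g x l eps : 0 < eps ->
  (forall y, Rabs (y - x) < eps -> f y = g y) ->
  derivable_pt_lim f x l -> derivable_pt_lim g x l.
Proof.
  intros Heps Hfg.
  apply (derivable_pt_lim_locally_ext f g x (x - eps) (x + eps)); [lra|].
  intros z Hz. apply Hfg, Rabs_def1; lra.
Qed.

Lemma derivable_pt_lim_unique_near f g x a b eps : 0 < eps ->
  (forall y, Rabs (y - x) < eps -> f y = g y) ->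
  derivable_pt_lim f x a -> derivable_pt_lim g x b -> a = b.
Proof.
  intros Heps Hfg Ha. apply uniqueness_limite.
  exact (derivable_pt_lim_near f g x a eps Heps Hfg Ha).
Qed.

Lemma derivable_pt_lim_continuity_pt f x l :
  derivable_pt_lim f x l -> continuity_pt f x.
Proof. intros Hl. apply derivable_continuous_pt. exists l. exact Hl. Qed.

Lemma derivable_pt_lim_affine l th x : derivable_pt_lim (fun y => l * y + th) x l.
Proof.
  eapply derivable_pt_lim_eq.
  - apply derivable_pt_lim_plus;
      [apply derivable_pt_lim_scal, derivable_pt_lim_id | apply derivable_pt_lim_const].
  - ring.
Qed.

Lemma derivable_pt_lim_cos_affine l th x :
  derivable_pt_lim (fun y => cos (l * y + th)) x (- (l * sin (l * x + th))).
Proof.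
  eapply derivable_pt_lim_eq.
  - apply (derivable_pt_lim_comp (fun y => l * y + th) cos);
      [apply derivable_pt_lim_affine | apply derivable_pt_lim_cos].
  - ring.
Qed.

Lemma derivable_pt_lim_sin_affine l th x :
  derivable_pt_lim (fun y => sin (l * y + th)) x (l * cos (l * x + th)).
Proof.
  eapply derivable_pt_lim_eq.
  - apply (derivable_pt_lim_comp (fun y => l * y + th) sin);
      [apply derivable_pt_lim_affine | apply derivable_pt_lim_sin].
  - ring.
Qed.

Lemma derivable_zero_const_on_interval J f : is_open_interval J ->
  (forall x, J x -> derivable_pt_lim f x 0) -> forall x y, J x -> J y -> f x = f y.
Proof.
  intros [_ [Hconv _]] Hf.
  assert (Hlt : forall x y, J x -> J y -> x < y -> f x = f y).
  { intros x y Jx Jy Hxy.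
    destruct (MVT_cor2 f (fun _ => 0) x y Hxy) as [c [Hc _]]; [|lra].
    intros c Hc. apply Hf, (Hconv x y); auto. }
  intros x y Jx Jy. destruct (Rtotal_order x y) as [h|[->|h]]; auto.
  symmetry; auto.
Qed.

Lemma continuity_pt_right_const f x c d : 0 < d -> continuity_pt f x ->
  (forall y, x < y < x + d -> f y = c) -> f x = c.
Proof.
  intros Hd Hc Hf. destruct (Req_dec (f x) c) as [E|E]; [exact E|exfalso].
  destruct (Hc (Rabs (f x - c))) as [alp [Halp Hnear]]; [apply Rabs_pos_lt; lra|].
  pose proof (Rmin_l alp d); pose proof (Rmin_r alp d).
  assert (Hm : 0 < Rmin alp d) by (apply Rmin_pos; lra).
  set (y := x + Rmin alp d / 2).
  assert (Hy : Rabs (y - x) < alp) by (unfold y; rewrite Rabs_right; lra).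
  specialize (Hnear y). simpl in Hnear. unfold R_dist in Hnear.
  rewrite (Hf y) in Hnear by (unfold y; lra).
  enough (Hlt : Rabs (c - f x) < Rabs (f x - c)) by (rewrite Rabs_minus_sym in Hlt; lra).
  apply Hnear. split; [split; [exact I | unfold y; lra] | exact Hy].
Qed.

Lemma derivable_zero_on_pos f l : derivable_pt_lim f 0 l ->
  (forall t, 0 < t -> f t = 0) -> f 0 = 0 /\ l = 0.
Proof.
  intros Hl Hpos.
  assert (H0 : f 0 = 0).
  { apply (continuity_pt_right_const f 0 0 1); [lra | | intros; apply Hpos; lra].
    exact (derivable_pt_lim_continuity_pt f 0 l Hl). }
  split; [exact H0|].
  destruct (Req_dec l 0) as [E|E]; [exact E|exfalso].
  destruct (Hl (Rabs l)) as [d Hd]; [apply Rabs_pos_lt; exact E|].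
  pose proof (cond_pos d).
  specialize (Hd (d / 2)). rewrite Rplus_0_l, H0, Hpos in Hd by lra.
  replace ((0 - 0) / (d / 2) - l) with (- l) in Hd by (field; lra).
  rewrite Rabs_Ropp in Hd.
  enough (Rabs l < Rabs l) by lra.
  apply Hd; [lra | rewrite Rabs_right; lra].
Qed.

Lemma polar_form p q : exists A th, A * cos th = p /\ A * sin th = q.
Proof.
  destruct (Req_dec p 0) as [->|Hp].
  - exists q, (PI / 2). rewrite cos_PI2, sin_PI2. split; ring.
  - set (th := atan (q / p)).
    assert (Hc : 0 < cos th).
    { apply cos_gt_0; unfold th; pose proof (atan_bound (q / p)); lra. }
    exists (p / cos th), th. split; [field; lra|].
    pose proof (tan_atan (q / p)) as Ht. fold th in Ht. unfold tan in Ht.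
    replace (p / cos th * sin th) with (p * (sin th / cos th)) by (field; lra).
    rewrite Ht. field. exact Hp.
Qed.

Lemma harmonic_solution J G G1 G2 l : is_open_interval J -> 0 < l ->
  (forall x, J x -> derivable_pt_lim G x (G1 x)) ->
  (forall x, J x -> derivable_pt_lim G1 x (G2 x)) ->
  (forall x, J x -> G2 x = - l ^ 2 * G x) ->
  exists A th, forall x, J x ->
    G x = A * cos (l * x + th) /\ G1 x = - (A * l * sin (l * x + th)).
Proof.
  intros HJ Hl DG DG1 Hode.
  pose proof HJ as [[x1 Jx1] _].
  destruct (polar_form (G x1) (- G1 x1 / l)) as [A [th0 [Hcos Hsin]]].
  set (th := th0 - l * x1).
  set (err := fun x => G x - A * cos (l * x + th)).
  set (err1 := fun x => G1 x + A * l * sin (l * x + th)).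
  assert (Derr : forall x, J x -> derivable_pt_lim err x (err1 x)).
  { intros x Jx. eapply derivable_pt_lim_eq.
    - apply derivable_pt_lim_minus;
        [apply DG, Jx | apply derivable_pt_lim_scal, derivable_pt_lim_cos_affine].
    - unfold err1. ring. }
  assert (Derr1 : forall x, J x -> derivable_pt_lim err1 x (- l ^ 2 * err x)).
  { intros x Jx. eapply derivable_pt_lim_eq.
    - apply derivable_pt_lim_plus;
        [apply DG1, Jx | apply derivable_pt_lim_scal, derivable_pt_lim_sin_affine].
    - unfold err. rewrite Hode by exact Jx. ring. }
  (* the energy of the difference [err] is conserved and vanishes at [x1] *)
  set (E := fun x => err1 x * err1 x + l ^ 2 * (err x * err x)).
  assert (DE : forall x, J x -> derivable_pt_lim E x 0).
  { intros x Jx. eapply derivable_pt_lim_eq.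
    - apply derivable_pt_lim_plus;
        [apply derivable_pt_lim_mult; apply Derr1, Jx
        | apply derivable_pt_lim_scal, derivable_pt_lim_mult; apply Derr, Jx].
    - ring. }
  assert (E1 : E x1 = 0).
  { unfold E, err, err1, th. replace (l * x1 + (th0 - l * x1)) with th0 by ring.
    rewrite Hcos. replace (A * l * sin th0) with (l * (A * sin th0)) by ring.
    rewrite Hsin. field. lra. }
  exists A, th. intros x Jx.
  assert (Ex : E x = 0)
    by (rewrite <- E1; exact (derivable_zero_const_on_interval J E HJ DE x x1 Jx Jx1)).
  unfold E in Ex.
  pose proof (Rle_0_sqr (err1 x)) as Hsq1; pose proof (Rle_0_sqr (err x)) as Hsq.
  unfold Rsqr in Hsq1, Hsq.
  assert (Hl2 : 0 <= l ^ 2 * (err x * err x)) by (apply Rmult_le_pos; nra).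
  assert (Herr1 : err1 x = 0) by (apply Rsqr_0_uniq; unfold Rsqr; lra).
  assert (Herr : err x = 0).
  { apply Rsqr_0_uniq, (Rmult_eq_reg_l (l ^ 2)); [unfold Rsqr; lra | apply pow_nonzero; lra]. }
  unfold err, err1 in *. split; lra.
Qed.

Lemma derivable_pt_lim_mul_sin_sq F dF l th x : derivable_pt_lim F x dF ->
  derivable_pt_lim (fun y => F y * sin (l * y + th) ^ 2) x
    (sin (l * x + th) * (dF * sin (l * x + th) + 2 * l * F x * cos (l * x + th))).
Proof.
  intros HF. eapply derivable_pt_lim_eq.
  - apply derivable_pt_lim_mult; [exact HF|].
    apply (derivable_pt_lim_comp (fun y => sin (l * y + th)) (fun s => s ^ 2));
      [apply derivable_pt_lim_sin_affine | apply derivable_pt_lim_pow].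
  - simpl. ring.
Qed.

Lemma sin_neq_0_small t : 0 < Rabs t < PI -> sin t <> 0.
Proof.
  intros Ht. destruct (Rcase_abs t) as [Hneg|Hpos].
  - rewrite Rabs_left in Ht by exact Hneg.
    pose proof (sin_gt_0 (- t)) as Hs. rewrite sin_neg in Hs. intro. lra.
  - rewrite Rabs_right in Ht by exact Hpos.
    pose proof (sin_gt_0 t) as Hs. intro. lra.
Qed.

Lemma sin_affine_isolated_zeros l th x : 0 < l ->
  exists d, 0 < d /\ forall y, y <> x -> Rabs (y - x) < d -> sin (l * y + th) <> 0.
Proof.
  intros Hl. destruct (Req_dec (sin (l * x + th)) 0) as [Z|NZ].
  - (* at a zero, [sin (a + t) = cos a * sin t] with [cos a <> 0] *)
    exists (PI / l). split; [apply Rdiv_lt_0_compat; [exact PI_RGT_0 | lra]|].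
    intros y Hyx Hy.
    replace (l * y + th) with ((l * x + th) + l * (y - x)) by ring.
    rewrite sin_plus, Z, Rmult_0_l, Rplus_0_l.
    apply Rmult_integral_contrapositive_currified.
    + intro Hc. exact (cos_sin_0 _ (conj Hc Z)).
    + apply sin_neq_0_small. rewrite Rabs_mult, (Rabs_right l) by lra. split.
      * apply Rmult_lt_0_compat; [lra | apply Rabs_pos_lt; lra].
      * apply (Rmult_lt_compat_l l) in Hy; [|lra].
        replace (l * (PI / l)) with PI in Hy by (field; lra). exact Hy.
  - destruct (derivable_pt_lim_continuity_pt _ _ _ (derivable_pt_lim_sin_affine l th x)
                (Rabs (sin (l * x + th)))) as [d [Hd Hnear]]; [apply Rabs_pos_lt; exact NZ|].
    exists d. split; [exact Hd|]. intros y Hyx Hy Zy.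
    assert (Hlt : Rabs (sin (l * y + th) - sin (l * x + th)) < Rabs (sin (l * x + th))).
    { apply Hnear. split; [split; [exact I | auto] | exact Hy]. }
    rewrite Zy, Rminus_0_l, Rabs_Ropp in Hlt. lra.
Qed.

Lemma sin_sq_potential_iff J F dF l th : is_open_interval J -> 0 < l ->
  (forall x, J x -> derivable_pt_lim F x (dF x)) ->
  (forall x, J x -> dF x * sin (l * x + th) + 2 * l * F x * cos (l * x + th) = 0) <->
  (exists k, forall x, J x -> sin (l * x + th) <> 0 -> F x = k / sin (l * x + th) ^ 2).
Proof.
  intros HJ Hl DF.
  set (g := fun y => F y * sin (l * y + th) ^ 2).
  assert (Dg : forall x, J x -> derivable_pt_lim g x
     (sin (l * x + th) * (dF x * sin (l * x + th) + 2 * l * F x * cos (l * x + th))))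
    by (intros x Jx; apply derivable_pt_lim_mul_sin_sq, DF, Jx).
  split.
  - intros Hrel. pose proof HJ as [[x1 Jx1] _].
    assert (Dg0 : forall x, J x -> derivable_pt_lim g x 0).
    { intros x Jx. eapply derivable_pt_lim_eq; [apply Dg, Jx | rewrite Hrel by exact Jx; ring]. }
    exists (g x1). intros x Jx Hs.
    rewrite <- (derivable_zero_const_on_interval J g HJ Dg0 x x1 Jx Jx1).
    unfold g. field. exact Hs.
  - intros [k HF] x Jx.
    pose proof HJ as [_ [_ Hop]]. destruct (Hop x Jx) as [eps [Heps HJeps]].
    destruct (sin_affine_isolated_zeros l th x Hl) as [d [Hd Hzeros]].
    set (e := Rmin eps d).
    assert (He : 0 < e) by (apply Rmin_pos; lra).
    assert (Hee : e <= eps) by apply Rmin_l. assert (Hed : e <= d) by apply Rmin_r.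
    assert (Hpunct : forall y, y <> x -> Rabs (y - x) < e -> J y /\ sin (l * y + th) <> 0).
    { intros y Hyx Hy.
      split; [apply HJeps | apply Hzeros; auto]; lra. }
    assert (Hright : forall y, x < y < x + e -> y <> x /\ Rabs (y - x) < e)
      by (intros y Hy; rewrite Rabs_right; lra).
    assert (Hgx : g x = k).
    { apply (continuity_pt_right_const g x k e He
               (derivable_pt_lim_continuity_pt _ _ _ (Dg x Jx))).
      intros y Hy. destruct (Hright y Hy) as [Hyx Hye]. destruct (Hpunct y Hyx Hye).
      unfold g. rewrite HF by assumption. field. assumption. }
    assert (Hg0 : sin (l * x + th)
                  * (dF x * sin (l * x + th) + 2 * l * F x * cos (l * x + th)) = 0).
    { apply (derivable_pt_lim_unique_near g (fun _ => k) x _ _ e He);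
        [| apply Dg, Jx | apply derivable_pt_lim_const].
      intros y Hy. destruct (Req_dec y x) as [->|Hyx]; [exact Hgx|].
      destruct (Hpunct y Hyx Hy). unfold g. rewrite HF by assumption. field. assumption. }
    destruct (Req_dec (sin (l * x + th)) 0) as [Z|NZ].
    + (* at a zero of [sin], continuity forces [k = 0] and then [F x = 0] *)
      assert (Hk : k = 0) by (rewrite <- Hgx; unfold g; rewrite Z; ring).
      assert (HFx : F x = 0).
      { apply (continuity_pt_right_const F x 0 e He
                 (derivable_pt_lim_continuity_pt _ _ _ (DF x Jx))).
        intros y Hy. destruct (Hright y Hy) as [Hyx Hye]. destruct (Hpunct y Hyx Hye).
        rewrite HF, Hk by assumption. unfold Rdiv. ring. }
      rewrite Z, HFx. ring.
    + apply Rmult_integral in Hg0. destruct Hg0; [contradiction | assumption].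
Qed.

(* [binomial_form k a x u = sum_b C(k, b) x ^ (k - b) u ^ b a_b].  With [x = p_r], [u = 1/r]
   and [a_b = (mu X_L) ^ b G] it is [U ^ k G], because [p_r] and [1/r] commute with [X_L]. *)
Fixpoint binomial_form (k : nat) (a : nat -> R) (x u : R) : R :=
  match k with
  | O => a O
  | S k' => x * binomial_form k' a x u + u * binomial_form k' (fun b => a (S b)) x u
  end.

Lemma binomial_form_ext k a a' x u : (forall b, (b <= k)%nat -> a b = a' b) ->
  binomial_form k a x u = binomial_form k a' x u.
Proof.
  revert a a'. induction k as [|k IH]; intros a a' Ha; simpl.
  - apply Ha. lia.
  - rewrite (IH a a'), (IH (fun b => a (S b)) (fun b => a' (S b))); auto;
      intros b Hb; apply Ha; lia.
Qed.

Lemma binomial_form_scal k s a x u :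
  binomial_form k (fun b => s * a b) x u = s * binomial_form k a x u.
Proof.
  revert a. induction k as [|k IH]; intros a; simpl; [reflexivity|].
  rewrite IH, (IH (fun b => a (S b))). ring.
Qed.

Lemma binomial_form_lincomb k s t a c x u :
  binomial_form k (fun b => s * a b - t * c b) x u
  = s * binomial_form k a x u - t * binomial_form k c x u.
Proof.
  revert a c. induction k as [|k IH]; intros a c; simpl; [reflexivity|].
  rewrite IH, (IH (fun b => a (S b))). ring.
Qed.

Lemma binomial_form_1_0 k a : binomial_form k a 1 0 = a O.
Proof. revert a. induction k as [|k IH]; intros a; simpl; [|rewrite IH]; ring. Qed.

Lemma derivable_binomial_form_coeffs k (a : nat -> R -> R) (a' : nat -> R) y x u :
  (forall b, (b <= k)%nat -> derivable_pt_lim (a b) y (a' b)) ->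
  derivable_pt_lim (fun z => binomial_form k (fun b => a b z) x u) y (binomial_form k a' x u).
Proof.
  revert a a'. induction k as [|k IH]; intros a a' Ha; simpl.
  - apply Ha. lia.
  - apply derivable_pt_lim_plus; apply derivable_pt_lim_scal.
    + apply IH. intros b Hb. apply Ha. lia.
    + apply (IH (fun b => a (S b)) (fun b => a' (S b))). intros b Hb. apply Ha. lia.
Qed.

Lemma derivable_binomial_form_x k a x u :
  derivable_pt_lim (fun z => binomial_form k a z u) x (INR k * binomial_form (pred k) a x u).
Proof.
  revert a. induction k as [|k IH]; intros a; simpl.
  - eapply derivable_pt_lim_eq; [apply derivable_pt_lim_const | ring].
  - eapply derivable_pt_lim_eq.
    + apply derivable_pt_lim_plus;
        [apply derivable_pt_lim_mult; [apply derivable_pt_lim_id | apply IH]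
        | apply derivable_pt_lim_scal, IH].
    + destruct k as [|k]; simpl; ring.
Qed.

Lemma derivable_binomial_form_u k a x u :
  derivable_pt_lim (fun v => binomial_form k a x v) u
    (INR k * binomial_form (pred k) (fun b => a (S b)) x u).
Proof.
  revert a. induction k as [|k IH]; intros a; simpl.
  - eapply derivable_pt_lim_eq; [apply derivable_pt_lim_const | ring].
  - eapply derivable_pt_lim_eq.
    + apply derivable_pt_lim_plus;
        [apply derivable_pt_lim_scal, IH
        | apply derivable_pt_lim_mult; [apply derivable_pt_lim_id | apply IH]].
    + destruct k as [|k]; simpl; ring.
Qed.

Lemma derivable_binomial_form_r k a x r : r <> 0 ->
  derivable_pt_lim (fun s => binomial_form k a x (/ s)) r
    (- (INR k * binomial_form (pred k) (fun b => a (S b)) x (/ r)) / r ^ 2).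
Proof.
  intros Hr. eapply derivable_pt_lim_eq.
  - apply (derivable_pt_lim_comp Rinv (fun v => binomial_form k a x v));
      [|apply derivable_binomial_form_u].
    apply (derivable_pt_lim_ext (fun s => 1 / s)); [intros; unfold Rdiv; ring|].
    apply (derivable_pt_lim_div (fct_cte 1) id);
      [apply derivable_pt_lim_const | apply derivable_pt_lim_id | exact Hr].
  - unfold fct_cte, id, Rsqr. field. exact Hr.
Qed.

Definition has_partials (J : R -> Prop) (h hp hq : R -> R -> R) : Prop :=
  forall psi pp, J psi ->
    derivable_pt_lim (fun y => h y pp) psi (hp psi pp) /\
    derivable_pt_lim (fun z => h psi z) pp (hq psi pp).

Lemma has_partials_unique J h hp hq h' hp' hq' : is_open_interval J ->
  has_partials J h hp hq -> has_partials J h' hp' hq' ->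
  (forall y z, J y -> h y z = h' y z) ->
  forall psi pp, J psi -> hp psi pp = hp' psi pp /\ hq psi pp = hq' psi pp.
Proof.
  intros [_ [_ Hop]] Hh Hh' Heq psi pp Jpsi.
  destruct (Hop psi Jpsi) as [eps [Heps HJeps]].
  destruct (Hh psi pp Jpsi) as [Hp Hq]. destruct (Hh' psi pp Jpsi) as [Hp' Hq'].
  split.
  - apply (derivable_pt_lim_unique_near (fun y => h y pp) (fun y => h' y pp) psi _ _ eps Heps);
      [|exact Hp | exact Hp'].
    intros y Hy. apply Heq, HJeps, Hy.
  - apply (uniqueness_limite (fun z => h' psi z) pp); [|exact Hq'].
    apply (derivable_pt_lim_ext (fun z => h psi z)); [intros z; apply Heq, Jpsi | exact Hq].
Qed.

Lemma binomial_form_partials J n (f : PF) (h hp hq : nat -> R -> R -> R) :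
  is_open_interval J ->
  (forall b, (b <= n)%nat -> has_partials J (h b) (hp b) (hq b)) ->
  (forall r psi pr pp, dom J r psi ->
     f r psi pr pp = binomial_form n (fun b => h b psi pp) pr (/ r)) ->
  is_d_r J f (fun r psi pr pp =>
    - (INR n * binomial_form (pred n) (fun b => h (S b) psi pp) pr (/ r)) / r ^ 2) /\
  is_d_psi J f (fun r psi pr pp => binomial_form n (fun b => hp b psi pp) pr (/ r)) /\
  is_d_pr J f (fun r psi pr pp => INR n * binomial_form (pred n) (fun b => h b psi pp) pr (/ r)) /\
  is_d_ppsi J f (fun r psi pr pp => binomial_form n (fun b => hq b psi pp) pr (/ r)).
Proof.
  intros [_ [_ Hop]] Hh Hf.
  split; [|split; [|split]]; intros r psi pr pp [Hr Jpsi].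
  - apply (derivable_pt_lim_near
             (fun s => binomial_form n (fun b => h b psi pp) pr (/ s)) _ r _ r Hr).
    + intros s Hs. symmetry. apply Hf. split; [|exact Jpsi].
      apply Rabs_def2 in Hs. lra.
    + apply derivable_binomial_form_r. lra.
  - destruct (Hop psi Jpsi) as [eps [Heps HJeps]].
    apply (derivable_pt_lim_near
             (fun y => binomial_form n (fun b => h b y pp) pr (/ r)) _ psi _ eps Heps).
    + intros y Hy. symmetry. apply Hf. split; [exact Hr | apply HJeps, Hy].
    + apply (derivable_binomial_form_coeffs n (fun b y => h b y pp)).
      intros b Hb. apply Hh; assumption.
  - apply (derivable_pt_lim_ext (fun x => binomial_form n (fun b => h b psi pp) x (/ r))).
    + intros x. symmetry. apply Hf. split; assumption.
    + apply derivable_binomial_form_x.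
  - apply (derivable_pt_lim_ext (fun z => binomial_form n (fun b => h b psi z) pr (/ r))).
    + intros z. symmetry. apply Hf. split; assumption.
    + apply (derivable_binomial_form_coeffs n (fun b z => h b psi z)).
      intros b Hb. apply Hh; assumption.
Qed.

Lemma U_iterates_binomial_form J dF mu G I n (h hp hq : nat -> R -> R -> R) :
  is_open_interval J -> U_iterates J dF mu G I n ->
  (forall b, (b < n)%nat -> has_partials J (h b) (hp b) (hq b)) ->
  (forall psi pp, J psi -> h O psi pp = G psi) ->
  (forall b psi pp, (b < n)%nat -> J psi ->
     h (S b) psi pp = mu * (pp * hp b psi pp - dF psi * hq b psi pp)) ->
  forall k, (k <= n)%nat -> forall r psi pr pp, dom J r psi ->
    I k r psi pr pp = binomial_form k (fun b => h b psi pp) pr (/ r).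
Proof.
  intros HJ [HI0 HIS] Hh Hh0 HhS k.
  induction k as [|k IH]; intros Hk r psi pr pp Hdom.
  - simpl. rewrite HI0, Hh0 by apply Hdom. reflexivity.
  - destruct (HIS k Hk) as [Ipsi [Ippsi [Hpsi [Hppsi Heq]]]].
    destruct (binomial_form_partials J k (I k) h hp hq HJ
                (fun b Hb => Hh b ltac:(lia)) (IH ltac:(lia)))
      as [_ [Hpsi' [_ Hppsi']]].
    rewrite Heq by exact Hdom. unfold XL.
    rewrite (uniqueness_limite _ _ _ _ (Hpsi r psi pr pp Hdom) (Hpsi' r psi pr pp Hdom)),
            (uniqueness_limite _ _ _ _ (Hppsi r psi pr pp Hdom) (Hppsi' r psi pr pp Hdom)),
            IH by (lia || exact Hdom).
    simpl. rewrite (binomial_form_ext k (fun b => h (S b) psi pp)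
      (fun b => (mu * pp) * hp b psi pp - (mu * dF psi) * hq b psi pp))
      by (intros b Hb; rewrite HhS by (lia || apply Hdom); ring).
    rewrite binomial_form_lincomb. destruct Hdom. field. lra.
Qed.

(* [XH_residual n a c L x u] is [r ^ 2 X_H (binomial_form n a p_r (1/r))] at [x = p_r],
   [u = 1/r], when [c_b = X_L a_b] and [L] is the value of [p_psi ^ 2 / 2 + F]. *)
Definition XH_residual (n : nat) (a c : nat -> R) (L x u : R) : R :=
  binomial_form n c x u
  + INR n * (2 * L * u * binomial_form (pred n) a x u
             - x * binomial_form (pred n) (fun b => a (S b)) x u).

Lemma constant_of_motion_iff_residual J F dF n (f : PF) (h hp hq : nat -> R -> R -> R) :
  is_open_interval J ->
  (forall b, (b <= n)%nat -> has_partials J (h b) (hp b) (hq b)) ->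
  (forall r psi pr pp, dom J r psi ->
     f r psi pr pp = binomial_form n (fun b => h b psi pp) pr (/ r)) ->
  constant_of_motion J F dF f <->
  forall r psi pr pp, dom J r psi ->
    XH_residual n (fun b => h b psi pp) (fun b => pp * hp b psi pp - dF psi * hq b psi pp)
      (/ 2 * pp ^ 2 + F psi) pr (/ r) = 0.
Proof.
  intros HJ Hh Hf.
  destruct (binomial_form_partials J n f h hp hq HJ Hh Hf) as [Dr [Dpsi [Dpr Dppsi]]].
  assert (HXH : forall r psi pr pp, 0 < r ->
    pr * (- (INR n * binomial_form (pred n) (fun b => h (S b) psi pp) pr (/ r)) / r ^ 2)
    + 2 * (/ 2 * pp ^ 2 + F psi) / r ^ 3
        * (INR n * binomial_form (pred n) (fun b => h b psi pp) pr (/ r))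
    + / r ^ 2 * XL dF (fun r psi pr pp => binomial_form n (fun b => hp b psi pp) pr (/ r))
                      (fun r psi pr pp => binomial_form n (fun b => hq b psi pp) pr (/ r))
                      r psi pr pp
    = / r ^ 2 * XH_residual n (fun b => h b psi pp)
                  (fun b => pp * hp b psi pp - dF psi * hq b psi pp)
                  (/ 2 * pp ^ 2 + F psi) pr (/ r)).
  { intros r psi pr pp Hr. unfold XH_residual, XL.
    rewrite binomial_form_lincomb. field. lra. }
  assert (Hinv : forall r, 0 < r -> / r ^ 2 <> 0)
    by (intros r Hr; apply Rinv_neq_0_compat, pow_nonzero; lra).
  split.
  - intros [fr [fpsi [fpr [fppsi [Hr [Hpsi [Hpr [Hppsi Hid]]]]]]]] r psi pr pp Hdom.
    specialize (Hid r psi pr pp Hdom). unfold XL in Hid.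
    rewrite (uniqueness_limite _ _ _ _ (Hr r psi pr pp Hdom) (Dr r psi pr pp Hdom)),
      (uniqueness_limite _ _ _ _ (Hpsi r psi pr pp Hdom) (Dpsi r psi pr pp Hdom)),
      (uniqueness_limite _ _ _ _ (Hpr r psi pr pp Hdom) (Dpr r psi pr pp Hdom)),
      (uniqueness_limite _ _ _ _ (Hppsi r psi pr pp Hdom) (Dppsi r psi pr pp Hdom)) in Hid.
    destruct Hdom as [Hr0 _]. unfold XL in HXH. rewrite HXH in Hid by exact Hr0.
    apply Rmult_integral in Hid. destruct Hid as [Hid|Hid]; [|exact Hid].
    exfalso. exact (Hinv r Hr0 Hid).
  - intros Hres. do 4 eexists.
    split; [exact Dr|]. split; [exact Dpsi|]. split; [exact Dpr|]. split; [exact Dppsi|].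
    intros r psi pr pp Hdom. rewrite HXH, Hres by apply Hdom. ring.
Qed.

Lemma XH_residual_low_coeffs m a c L :
  (forall t, 0 < t -> XH_residual (S m) a c L 1 t = 0) ->
  c O = INR (S m) * a 1%nat /\ c 1%nat + 2 * L * a O = INR m * a 2%nat.
Proof.
  intros Hres. unfold XH_residual in Hres. simpl pred in Hres.
  set (Z := fun t => binomial_form (S m) c 1 t
    + INR (S m) * (2 * L * t * binomial_form m a 1 t
                   - 1 * binomial_form m (fun b => a (S b)) 1 t)).
  assert (DZ : derivable_pt_lim Z 0
    (INR (S m) * (c 1%nat + (2 * L * a O - INR m * a 2%nat)))).
  { eapply derivable_pt_lim_eq.
    - apply derivable_pt_lim_plus; [apply derivable_binomial_form_u|].
      apply derivable_pt_lim_scal, derivable_pt_lim_minus.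
      + apply derivable_pt_lim_mult;
          [apply derivable_pt_lim_scal, derivable_pt_lim_id | apply derivable_binomial_form_u].
      + apply derivable_pt_lim_scal, derivable_binomial_form_u.
    - rewrite !binomial_form_1_0. ring. }
  destruct (derivable_zero_on_pos Z _ DZ Hres) as [Z0 DZ0].
  unfold Z in Z0. rewrite !binomial_form_1_0 in Z0.
  assert (Hm : INR (S m) <> 0) by (apply not_0_INR; lia).
  split.
  - lra.
  - apply Rmult_integral in DZ0. destruct DZ0 as [|DZ0]; [contradiction | lra].
Qed.

Lemma XH_residual_vanishes m a c L x u :
  (forall b, c b = INR (S m) * a (S b)) ->
  (forall b, a (S (S b)) = - (2 * L) * a b) ->
  XH_residual (S m) a c L x u = 0.
Proof.
  intros Hc Ha. unfold XH_residual. simpl pred.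
  rewrite (binomial_form_ext _ c _ x u (fun b _ => Hc b)), binomial_form_scal.
  simpl binomial_form at 1.
  rewrite (binomial_form_ext _ _ _ x u (fun b _ => Ha b)), binomial_form_scal.
  ring.
Qed.

Lemma U_iterates_partials J dF mu G I n :
  U_iterates J dF mu G I n ->
  (exists p q, is_d_psi J (I n) p /\ is_d_ppsi J (I n) q) ->
  exists P Q : nat -> PF, forall b, (b <= n)%nat ->
    is_d_psi J (I b) (P b) /\ is_d_ppsi J (I b) (Q b).
Proof.
  intros [_ HIS] Hn.
  destruct (functional_choice (fun b (pq : PF * PF) => (b <= n)%nat ->
              is_d_psi J (I b) (fst pq) /\ is_d_ppsi J (I b) (snd pq))) as [f Hf].
  - intros b. destruct (Nat.lt_trichotomy b n) as [Hb|[->|Hb]].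
    + destruct (HIS b Hb) as [p [q [Hp [Hq _]]]]. exists (p, q). intros _. split; assumption.
    + destruct Hn as [p [q Hpq]]. exists (p, q). intros _. exact Hpq.
    + exists (I b, I b). intros. lia.
  - exists (fun b => fst (f b)), (fun b => snd (f b)). exact Hf.
Qed.

(* The coefficients [a_b = (mu X_L) ^ b G] of [U ^ k G] are read off at [r = 1], [p_r = 0]. *)
Lemma U_iterates_coefficients J dF mu G I n :
  is_open_interval J -> U_iterates J dF mu G I n ->
  (exists p q, is_d_psi J (I n) p /\ is_d_ppsi J (I n) q) ->
  exists h hp hq : nat -> R -> R -> R,
    (forall b, (b <= n)%nat -> has_partials J (h b) (hp b) (hq b)) /\
    (forall psi pp, J psi -> h O psi pp = G psi) /\
    (forall b psi pp, (b < n)%nat -> J psi ->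
       h (S b) psi pp = mu * (pp * hp b psi pp - dF psi * hq b psi pp)) /\
    (forall r psi pr pp, dom J r psi ->
       I n r psi pr pp = binomial_form n (fun b => h b psi pp) pr (/ r)).
Proof.
  intros HJ HU Hn.
  destruct (U_iterates_partials J dF mu G I n HU Hn) as [P [Q HPQ]].
  assert (Hdom1 : forall psi, J psi -> dom J 1 psi) by (split; [lra | assumption]).
  set (h := fun b psi pp => I b 1 psi 0 pp).
  set (hp := fun b psi pp => P b 1 psi 0 pp).
  set (hq := fun b psi pp => Q b 1 psi 0 pp).
  assert (Hh : forall b, (b <= n)%nat -> has_partials J (h b) (hp b) (hq b)).
  { intros b Hb psi pp Jpsi. destruct (HPQ b Hb) as [Hp Hq].
    split; [apply Hp | apply Hq]; apply Hdom1, Jpsi. }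
  assert (Hh0 : forall psi pp, J psi -> h O psi pp = G psi)
    by (intros psi pp Jpsi; apply HU, Hdom1, Jpsi).
  assert (HhS : forall b psi pp, (b < n)%nat -> J psi ->
            h (S b) psi pp = mu * (pp * hp b psi pp - dF psi * hq b psi pp)).
  { intros b psi pp Hb Jpsi. destruct HU as [_ HIS].
    destruct (HIS b Hb) as [Ipsi [Ippsi [Hpsi [Hppsi Heq]]]].
    destruct (HPQ b ltac:(lia)) as [Hpsi' Hppsi'].
    pose proof (Hdom1 psi Jpsi) as Hd.
    unfold h, hp, hq. rewrite Heq by exact Hd. unfold XL.
    rewrite (uniqueness_limite _ _ _ _ (Hpsi 1 psi 0 pp Hd) (Hpsi' 1 psi 0 pp Hd)),
            (uniqueness_limite _ _ _ _ (Hppsi 1 psi 0 pp Hd) (Hppsi' 1 psi 0 pp Hd)).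
    field. }
  exists h, hp, hq. split; [exact Hh | split; [exact Hh0 | split; [exact HhS|]]].
  apply (U_iterates_binomial_form J dF mu G I n h hp hq HJ HU); auto.
  intros b Hb. apply Hh. lia.
Qed.

Lemma constant_of_motion_low_order J lam mu F dF G G1 G2 I :
  is_open_interval J -> (0 < lam)%nat ->
  (forall x, J x -> derivable_pt_lim G x (G1 x)) ->
  (forall x, J x -> derivable_pt_lim G1 x (G2 x)) ->
  U_iterates J dF mu G I lam -> constant_of_motion J F dF (I lam) ->
  forall psi pp, J psi ->
    (1 - INR lam * mu) * pp * G1 psi = 0 /\
    (1 - (INR lam - 1) * mu) * mu * (pp ^ 2 * G2 psi - dF psi * G1 psi)
      + (pp ^ 2 + 2 * F psi) * G psi = 0.
Proof.
  intros HJ Hlam DG DG1 HU Hcm psi pp Jpsi.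
  destruct (U_iterates_coefficients J dF mu G I lam HJ HU)
    as [h [hp [hq [Hh [Hh0 [HhS Hrep]]]]]].
  { destruct Hcm as [_ [p [_ [q [_ [Hp [_ [Hq _]]]]]]]]. exists p, q. split; assumption. }
  pose proof (proj1 (constant_of_motion_iff_residual J F dF lam (I lam) h hp hq HJ Hh Hrep) Hcm)
    as Hres.
  destruct lam as [|m]; [lia|].
  destruct (XH_residual_low_coeffs m (fun b => h b psi pp)
              (fun b => pp * hp b psi pp - dF psi * hq b psi pp) (/ 2 * pp ^ 2 + F psi))
    as [E0 E1].
  { intros t Ht. rewrite <- (Rinv_inv t).
    apply Hres. split; [apply Rinv_0_lt_compat, Ht | exact Jpsi]. }
  assert (HG0 : has_partials J (fun y _ => G y) (fun y _ => G1 y) (fun _ _ => 0))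
    by (intros y z Jy; split; [apply DG, Jy | apply derivable_pt_lim_const]).
  pose proof (has_partials_unique J _ _ _ _ _ _ HJ (Hh O ltac:(lia)) HG0 Hh0) as Hd0.
  assert (Hh1 : forall y z, J y -> h 1%nat y z = mu * (z * G1 y)).
  { intros y z Jy. rewrite HhS by (lia || exact Jy).
    destruct (Hd0 y z Jy) as [-> ->]. ring. }
  assert (HG1 : has_partials J (fun y z => mu * (z * G1 y)) (fun y z => mu * (z * G2 y))
                  (fun y _ => mu * G1 y)).
  { intros y z Jy. split.
    - apply derivable_pt_lim_scal, derivable_pt_lim_scal, DG1, Jy.
    - eapply derivable_pt_lim_eq;
        [apply derivable_pt_lim_scal, derivable_pt_lim_mult;
           [apply derivable_pt_lim_id | apply derivable_pt_lim_const] | ].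
      unfold fct_cte. ring. }
  destruct (has_partials_unique J _ _ _ _ _ _ HJ (Hh 1%nat ltac:(lia)) HG1 Hh1 psi pp Jpsi)
    as [Hp1 Hq1].
  assert (Hh2 : INR m * h 2%nat psi pp
                = INR m * (mu * (pp * hp 1%nat psi pp - dF psi * hq 1%nat psi pp))).
  { destruct m as [|m]; [simpl; ring|]. rewrite HhS by (lia || exact Jpsi). reflexivity. }
  destruct (Hd0 psi pp Jpsi) as [Hp0 Hq0].
  rewrite Hp0, Hq0, Hh1 in E0 by exact Jpsi.
  rewrite Hh2, Hp1, Hq1, Hh0 in E1 by exact Jpsi.
  rewrite S_INR in *. split.
  - lra.
  - replace (INR m + 1 - 1) with (INR m) by ring. lra.
Qed.

Lemma constant_of_motion_forward J lam mu F dF G I :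
  is_open_interval J -> (0 < lam)%nat -> smooth_on J G ->
  (forall x, J x -> derivable_pt_lim F x (dF x)) ->
  (exists x y, J x /\ J y /\ G x <> G y) ->
  U_iterates J dF mu G I lam -> constant_of_motion J F dF (I lam) ->
  INR lam * mu = 1 /\
  exists k psi0 A, A <> 0 /\
    forall psi, J psi ->
      G psi = A * cos (INR lam * psi + psi0) /\
      (sin (INR lam * psi + psi0) <> 0 -> F psi = k / (sin (INR lam * psi + psi0)) ^ 2).
Proof.
  intros HJ Hlam [DG [HDG0 HDG]] DF [x0 [y0 [Jx0 [Jy0 HGxy]]]] HU Hcm.
  set (l := INR lam).
  assert (Hl : 0 < l) by (apply lt_0_INR, Hlam).
  assert (DG0 : forall x, J x -> derivable_pt_lim G x (DG 1%nat x))
    by (intros x Jx; rewrite <- HDG0; apply HDG, Jx).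
  pose proof (constant_of_motion_low_order J lam mu F dF G (DG 1%nat) (DG 2%nat) I
                HJ Hlam DG0 (HDG 1%nat) HU Hcm) as Hlow.
  assert (Hlm : l * mu = 1).
  { destruct (classic (exists psi, J psi /\ DG 1%nat psi <> 0)) as [[psi [Jpsi Hpsi]]|Hconst].
    - destruct (Hlow psi 1 Jpsi) as [H1 _].
      apply Rmult_integral in H1. destruct H1 as [H1|]; [fold l in H1; lra | contradiction].
    - exfalso. apply HGxy, (derivable_zero_const_on_interval J G HJ); [|assumption..].
      intros x Jx. destruct (Req_dec (DG 1%nat x) 0) as [<-|Hx]; [apply DG0, Jx|].
      exfalso. apply Hconst. exists x. split; assumption. }
  assert (Hode : forall psi, J psi ->
            DG 2%nat psi = - l ^ 2 * G psi /\
            dF psi * DG 1%nat psi = 2 * l ^ 2 * F psi * G psi).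
  { intros psi Jpsi.
    destruct (Hlow psi 0 Jpsi) as [_ E0]. destruct (Hlow psi 1 Jpsi) as [_ E1]. fold l in E0, E1.
    replace (1 - (l - 1) * mu) with mu in E0, E1 by lra.
    assert (K0 : mu * mu * (dF psi * DG 1%nat psi) = 2 * F psi * G psi) by lra.
    assert (K1 : mu * mu * DG 2%nat psi = - G psi) by lra.
    split.
    - transitivity (l ^ 2 * (mu * mu * DG 2%nat psi) + (1 - (l * mu) ^ 2) * DG 2%nat psi);
        [ring | rewrite K1, Hlm; ring].
    - transitivity (l ^ 2 * (mu * mu * (dF psi * DG 1%nat psi))
                    + (1 - (l * mu) ^ 2) * (dF psi * DG 1%nat psi));
        [ring | rewrite K0, Hlm; ring]. }
  destruct (harmonic_solution J G (DG 1%nat) (DG 2%nat) l HJ Hl DG0 (HDG 1%nat)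
              (fun x Jx => proj1 (Hode x Jx))) as [A [th HG]].
  assert (HA : A <> 0).
  { intros ->. apply HGxy. rewrite (proj1 (HG x0 Jx0)), (proj1 (HG y0 Jy0)). ring. }
  destruct (proj1 (sin_sq_potential_iff J F dF l th HJ Hl DF)) as [k Hk].
  { intros x Jx. destruct (HG x Jx) as [HGx HG1x]. destruct (Hode x Jx) as [_ HF].
    rewrite HGx, HG1x in HF.
    apply (Rmult_eq_reg_l (- (A * l))); [|intros H; apply HA; nra].
    transitivity (dF x * - (A * l * sin (l * x + th)) - 2 * l ^ 2 * F x * (A * cos (l * x + th)));
      [ring | rewrite HF; ring]. }
  split; [exact Hlm|].
  exists k, th, A. split; [exact HA|].
  intros psi Jpsi. split; [apply HG, Jpsi | apply Hk, Jpsi].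
Qed.

Section TrigCoefficients.

Variables (J : R -> Prop) (A l th : R) (F dF : R -> R).

(* [(mu X_L) ^ b (A cos (l psi + th))] for [mu = 1/l], given the relation of
   [sin_sq_potential_iff]: since [X_L] annihilates [L], two steps multiply by [-2L]. *)
Fixpoint trig_coeff (b : nat) (psi pp : R) : R :=
  match b with
  | O => A * cos (l * psi + th)
  | S O => - (A * pp * sin (l * psi + th))
  | S (S b') => - (pp ^ 2 + 2 * F psi) * trig_coeff b' psi pp
  end.

Fixpoint trig_coeff_psi (b : nat) (psi pp : R) : R :=
  match b with
  | O => A * - (l * sin (l * psi + th))
  | S O => - (A * pp * (l * cos (l * psi + th)))
  | S (S b') => - (2 * dF psi) * trig_coeff b' psi pp
                - (pp ^ 2 + 2 * F psi) * trig_coeff_psi b' psi pp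
  end.

Fixpoint trig_coeff_pp (b : nat) (psi pp : R) : R :=
  match b with
  | O => 0
  | S O => - (A * sin (l * psi + th))
  | S (S b') => - (2 * pp) * trig_coeff b' psi pp
                - (pp ^ 2 + 2 * F psi) * trig_coeff_pp b' psi pp
  end.

Hypothesis DF : forall x, J x -> derivable_pt_lim F x (dF x).

Lemma trig_coeff_partials b :
  has_partials J (trig_coeff b) (trig_coeff_psi b) (trig_coeff_pp b).
Proof.
  enough (H : has_partials J (trig_coeff b) (trig_coeff_psi b) (trig_coeff_pp b) /\
              has_partials J (trig_coeff (S b)) (trig_coeff_psi (S b)) (trig_coeff_pp (S b)))
    by apply H.
  induction b as [|b [IH IHS]].
  - split; intros psi pp Jpsi; simpl; split.
    + apply derivable_pt_lim_scal, derivable_pt_lim_cos_affine.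
    + apply derivable_pt_lim_const.
    + eapply derivable_pt_lim_eq;
        [apply derivable_pt_lim_opp, derivable_pt_lim_scal, derivable_pt_lim_sin_affine | ring].
    + eapply derivable_pt_lim_eq.
      * apply derivable_pt_lim_opp, derivable_pt_lim_mult;
          [apply derivable_pt_lim_scal, derivable_pt_lim_id | apply derivable_pt_lim_const].
      * unfold fct_cte. ring.
  - split; [exact IHS|]. intros psi pp Jpsi. destruct (IH psi pp Jpsi) as [Hp Hq].
    cbn [trig_coeff trig_coeff_psi trig_coeff_pp]. split.
    + eapply derivable_pt_lim_eq; [apply derivable_pt_lim_mult; [|exact Hp]|].
      * apply derivable_pt_lim_opp, derivable_pt_lim_plus;
          [apply derivable_pt_lim_const | apply derivable_pt_lim_scal, DF, Jpsi].
      * cbv beta. ring.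
    + eapply derivable_pt_lim_eq; [apply derivable_pt_lim_mult; [|exact Hq]|].
      * apply derivable_pt_lim_opp, derivable_pt_lim_plus;
          [apply derivable_pt_lim_pow | apply derivable_pt_lim_const].
      * cbv beta. simpl. ring.
Qed.

Hypothesis Hrel : forall x, J x ->
  dF x * sin (l * x + th) + 2 * l * F x * cos (l * x + th) = 0.

Lemma trig_coeff_XL b psi pp : J psi ->
  pp * trig_coeff_psi b psi pp - dF psi * trig_coeff_pp b psi pp
  = l * trig_coeff (S b) psi pp.
Proof.
  intros Jpsi.
  enough (H : forall b, pp * trig_coeff_psi b psi pp - dF psi * trig_coeff_pp b psi pp
                        = l * trig_coeff (S b) psi pp /\
                        pp * trig_coeff_psi (S b) psi pp - dF psi * trig_coeff_pp (S b) psi pp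
                        = l * trig_coeff (S (S b)) psi pp) by apply H.
  intros b'. induction b' as [|b' [IH IHS]].
  - simpl. split; [ring|].
    transitivity (l * (- (pp ^ 2 + 2 * F psi) * (A * cos (l * psi + th)))
                  + A * (dF psi * sin (l * psi + th) + 2 * l * F psi * cos (l * psi + th)));
      [ring | rewrite Hrel by exact Jpsi; ring].
  - split; [exact IHS|].
    change (trig_coeff (S (S (S b'))) psi pp)
      with (- (pp ^ 2 + 2 * F psi) * trig_coeff (S b') psi pp).
    simpl trig_coeff_psi. simpl trig_coeff_pp.
    transitivity (- (pp ^ 2 + 2 * F psi) *
                  (pp * trig_coeff_psi b' psi pp - dF psi * trig_coeff_pp b' psi pp));
      [ring | rewrite IH; ring].
Qed.

End TrigCoefficients.

Lemma constant_of_motion_backward J lam mu F dF G I :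
  is_open_interval J -> (0 < lam)%nat ->
  (forall x, J x -> derivable_pt_lim F x (dF x)) ->
  U_iterates J dF mu G I lam ->
  INR lam * mu = 1 ->
  (exists k psi0 A, A <> 0 /\
    forall psi, J psi ->
      G psi = A * cos (INR lam * psi + psi0) /\
      (sin (INR lam * psi + psi0) <> 0 -> F psi = k / (sin (INR lam * psi + psi0)) ^ 2)) ->
  constant_of_motion J F dF (I lam).
Proof.
  intros HJ Hlam DF HU Hlm [k [th [A [_ HGF]]]].
  assert (Hl : 0 < INR lam) by (apply lt_0_INR, Hlam).
  pose proof (proj2 (sin_sq_potential_iff J F dF (INR lam) th HJ Hl DF)
                (ex_intro _ k (fun x Jx => proj2 (HGF x Jx)))) as Hrel.
  set (h := trig_coeff A (INR lam) th F).
  set (hp := trig_coeff_psi A (INR lam) th F dF).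
  set (hq := trig_coeff_pp A (INR lam) th F).
  pose proof (trig_coeff_partials J A (INR lam) th F dF DF) as Hh.
  pose proof (trig_coeff_XL J A (INR lam) th F dF Hrel) as HXL.
  assert (Hrep := U_iterates_binomial_form J dF mu G I lam h hp hq HJ HU
                    (fun b _ => Hh b) (fun psi pp Jpsi => eq_sym (proj1 (HGF psi Jpsi)))).
  apply (constant_of_motion_iff_residual J F dF lam (I lam) h hp hq HJ (fun b _ => Hh b)).
  - apply Hrep; [|lia].
    intros b psi pp _ Jpsi. unfold hp, hq. rewrite HXL by exact Jpsi.
    transitivity (INR lam * mu * h (S b) psi pp); [rewrite Hlm; ring | unfold h; ring].
  - intros r psi pr pp [_ Jpsi]. destruct lam as [|m]; [lia|].
    apply XH_residual_vanishes.
    + intros b. apply HXL, Jpsi.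
    + intros b. unfold h. cbn [trig_coeff]. field.
Qed.

Theorem theorem1 (J : R -> Prop) (lam : nat) (mu : R) (F dF G : R -> R)
    (I : nat -> PF) :
  is_open_interval J ->
  (0 < lam)%nat ->
  smooth_on J F ->
  smooth_on J G ->
  (forall x, J x -> derivable_pt_lim F x (dF x)) ->
  (exists x y, J x /\ J y /\ G x <> G y) ->
  U_iterates J dF mu G I lam ->
  (constant_of_motion J F dF (I lam) <->
   (INR lam * mu = 1 /\
    exists k psi0 A, A <> 0 /\
      forall psi, J psi ->
        G psi = A * cos (INR lam * psi + psi0) /\
        (sin (INR lam * psi + psi0) <> 0 ->
           F psi = k / (sin (INR lam * psi + psi0)) ^ 2))).
Proof.
  intros HJ Hlam _ HG DF Hnc HU. split.
  - apply (constant_of_motion_forward J lam mu F dF G I); assumption.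
  - intros [Hlm HGF]. exact (constant_of_motion_backward J lam mu F dF G I HJ Hlam DF HU Hlm HGF).
Qed.
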